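(* Let $n\ge6$ be even, $l$ an integer with $2\le l<n/2$, $m\in\mathbb N$, $B=B^{(1,n,l)}$, and assume the seeds are i.i.d. uniform on $[n]$. Then for every $i\in B\setminus\{l+1\}$, $$\mathsf P\bigl(\Xi_B(l+1)\le\Xi_B(i)\bigr)\le\exp\Bigl\{m\log\Bigl[1-\tfrac1n\bigl(\sqrt{l+1}-\sqrt2\bigr)^2\Bigr]\Bigr\}.$$
   Context: Candidates $[n]$, $m$ voters; voter $j$ has the clockwise oriented preference list $(s_j,s_j+1,\dots,n,1,\dots,s_j-1)$ with seed $s_j$; the seeds are independent and uniform on $[n]$. In an election among a non-empty $S\subseteq[n]$ each voter votes for the first candidate of $S$ in its list; $\Xi_S(i)$ is the number of votes for $i\in S$. For even $n$ and $2\le l<n/2$: $B^{(1,n,l)}=\{n-l+1,\dots,n\}\cup\{l+2i-1:1\le i\le (n-2l)/2\}$ (the complement of $A^{(1,n,l)}=\{1,\dots,l\}\cup\{l+2i:1\le i\le(n-2l)/2\}$). *)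

From mathcomp Require Import all_boot.
From Stdlib Require Import Reals.

Set Implicit Arguments.
Unset Strict Implicit.
Unset Printing Implicit Defensive.

(* Candidates are the natural numbers 1..n.  A seed is an element s : 'I_n,
   representing the seed value (val s).+1 in [n]. *)

(* Position of candidate c (in 1..n) in the clockwise list of a voter with
   seed value sv (in 1..n): the list is (sv, sv+1, ..., n, 1, ..., sv-1). *)
Definition rank (n sv c : nat) : nat := (c + n - sv) %% n.

Definition votes_for (n : nat) (S : pred nat) (s : 'I_n) (i : nat) : bool :=
  [&& 1 <= i <= n, S i &
      [forall c : 'I_n, S c.+1 ==> (rank n s.+1 i <= rank n s.+1 c.+1)]].

Definition Xi (n m : nat) (S : pred nat) (seeds : {ffun 'I_m -> 'I_n}) (i : nat)
  : nat := #|[set j : 'I_m | votes_for S (seeds j) i]|.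

Definition Bset (n l : nat) : pred nat := fun c =>
  ((n - l + 1 <= c) && (c <= n)) ||
  [exists i : 'I_((n - 2 * l) %/ 2).+1, (1 <= i) && (c == l + 2 * i - 1)].

(* Probability under i.i.d. uniform seeds on [n], i.e. uniform measure on
   the n^m seed assignments. *)
Definition prob_seeds (n m : nat) (E : pred {ffun 'I_m -> 'I_n}) : R :=
  (INR #|[set s | E s]| / INR (n ^ m))%R.
Arguments prob_seeds n m E : clear implicits.

From mathcomp Require Import all_boot all_order all_algebra zify Rstruct.
From Stdlib Require Import Reals Lra.
Import Order.TTheory GRing.Theory Num.Theory.

Set Implicit Arguments.
Unset Strict Implicit.
Unset Printing Implicit Defensive.

(* Every candidate of B is at least l+1, so each of the l+1 seeds 1..l+1
   makes its voter choose l+1; any other i in B has a predecessor in B at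
   distance at most 2, so at most 2 seeds make a voter choose i.  With
   a = [vote for l+1] and b = [vote for i] (disjoint events), weighting a seed
   by t, 1/t or 1 according to a, b or neither (0 < t <= 1) shows that the
   assignments with #a <= #b number at most (sum of weights)^m, which bounds
   the probability by (1 + (t-1) P(a) + (1/t-1) P(b))^m.  The choice
   t = sqrt 2 / sqrt (l+1) makes the base at most 1 - (sqrt (l+1) - sqrt 2)^2 / n. *)

Lemma rank_sub n sv c : 1 <= sv <= c -> c <= n -> rank n sv c = c - sv.
Proof.
move=> /andP[sv1 svc] cn; rewrite /rank.
have -> : c + n - sv = c - sv + n by lia.
by rewrite modnDr modn_small //; lia.
Qed.

Lemma rank_wrap n sv c : c < sv <= n -> rank n sv c = c + n - sv.
Proof. by move=> /andP[csv svn]; rewrite /rank modn_small //; lia. Qed.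

Lemma rank_inj n sv i j : 1 <= sv <= n -> 1 <= i <= n -> 1 <= j <= n ->
  rank n sv i = rank n sv j -> i = j.
Proof.
move=> /andP[sv1 svn] /andP[i1 i_n] /andP[j1 j_n].
have rk c : 1 <= c <= n -> rank n sv c = if sv <= c then c - sv else c + n - sv.
  move=> /andP[c1 cn]; case: leqP => csv.
  - by apply: rank_sub => //; lia.
  - by apply: rank_wrap; lia.
rewrite !rk ?i1 ?j1 //.
by case: leqP => ?; case: leqP => ?; lia.
Qed.

Section Votes.

Variables (n : nat) (S : pred nat).

Lemma votes_for_functional (s : 'I_n) i j :
  votes_for S s i -> votes_for S s j -> i = j.
Proof.
move=> /and3P[i_n Si /forallP ri] /and3P[j_n Sj /forallP rj].
have i' : i.-1 < n by lia.
have j' : j.-1 < n by lia.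
have := ri (Ordinal j'); have := rj (Ordinal i'); rewrite /=.
rewrite !prednK ?Si ?Sj /= => [rji rij||]; try lia.
apply: (rank_inj (sv := s.+1) (n := n)) => //; first by have := ltn_ord s; lia.
by apply/eqP; rewrite eqn_leq rij rji.
Qed.

Lemma votes_for_min (s : 'I_n) i :
  1 <= i <= n -> S i -> (forall c, S c -> i <= c) -> s < i -> votes_for S s i.
Proof.
move=> i_n Si minS si; apply/and3P; split=> //.
apply/forallP => c; apply/implyP => Sc; have := minS _ Sc; have := ltn_ord c.
move=> cn ic; rewrite !rank_sub //; lia.
Qed.

Lemma votes_for_seed (s : 'I_n) c i :
  1 <= c < i -> S c -> votes_for S s i -> c <= s < i.
Proof.
move=> ci Sc /and3P[i_n _ /forallP ri].
have c' : c.-1 < n by lia.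
have := ri (Ordinal c'); rewrite /= prednK ?Sc /=; last by lia.
have := ltn_ord s; have [sc|cs] := leqP s.+1 c => sn.
  by rewrite !rank_sub //; lia.
have [si|is_] := leqP s.+1 i; first by lia.
by rewrite !rank_wrap //; lia.
Qed.

Lemma card_votes_for_min i :
  1 <= i <= n -> S i -> (forall c, S c -> i <= c) ->
  i <= #|(fun s : 'I_n => votes_for S s i)|.
Proof.
move=> i_n Si minS; have i_le_n : i <= n by lia.
have widen_inj : injective (widen_ord i_le_n) by move=> x y /(congr1 val) /= /val_inj.
rewrite -[X in X <= _]card_ord -(card_imset _ widen_inj).
apply/subset_leq_card/subsetP => _ /imsetP[s _ ->].
by rewrite unfold_in; apply: votes_for_min => //=; apply: ltn_ord.
Qed.

Lemma card_votes_for_gap c i :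
  1 <= c < i -> S c -> #|(fun s : 'I_n => votes_for S s i)| <= i - c.
Proof.
move=> ci Sc; rewrite cardE -(size_map val) -[i - c](size_iota c).
apply: uniq_leq_size; first by rewrite (map_inj_uniq val_inj) enum_uniq.
move=> _ /mapP[s + ->]; rewrite mem_enum unfold_in => /(votes_for_seed ci Sc).
by rewrite mem_iota subnKC //; lia.
Qed.

End Votes.

Lemma Bset_bounds n l c : 2 * l < n -> Bset n l c -> l + 1 <= c <= n.
Proof.
move=> l_small /orP[|/existsP[j /andP[j1 /eqP ->]]]; first lia.
by have := ltn_ord j; lia.
Qed.

Lemma Bset_odd n l j : 1 <= j <= (n - 2 * l) %/ 2 -> Bset n l (l + 2 * j - 1).
Proof.
move=> j_range; apply/orP; right; apply/existsP.
have j_lt : j < ((n - 2 * l) %/ 2).+1 by lia.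
by exists (Ordinal j_lt); rewrite /= eqxx andbT; lia.
Qed.

Lemma Bset_l1 n l : ~~ odd n -> 2 * l < n -> Bset n l (l + 1).
Proof.
move=> /negbTE n_even l_small; have n_mod2 : n %% 2 = 0 by rewrite modn2 n_even.
by have := @Bset_odd n l 1; rewrite muln1 -addnBA //; apply; lia.
Qed.

Lemma Bset_gap n l i : ~~ odd n -> 2 * l < n -> Bset n l i -> i <> l + 1 ->
  exists2 c, Bset n l c & i - 2 <= c < i.
Proof.
move=> /negbTE n_even l_small Bi il1; have n_mod2 : n %% 2 = 0 by rewrite modn2 n_even.
case/orP: (Bi) => [/andP[i_lo i_hi]|/existsP[j /andP[j1 /eqP ij]]].
- have [->|i_ne] := eqVneq i (n - l + 1).
    exists (l + 2 * ((n - 2 * l) %/ 2) - 1); last by lia.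
    by apply: Bset_odd; lia.
  by exists i.-1; [apply/orP; left|]; lia.
- exists (l + 2 * (j - 1) - 1); last by lia.
  by apply: Bset_odd; have := ltn_ord j; lia.
Qed.

Section Tilting.

Local Open Scope ring_scope.

Variables (T : finType) (a b : pred T).
Hypothesis ab_disjoint : forall s, a s -> ~~ b s.

Definition tilt (F : fieldType) (t : F) (s : T) : F :=
  if a s then t else if b s then t^-1 else 1.

Lemma sum_tilt (F : fieldType) (t : F) :
  \sum_s tilt t s = #|T|%:R + (t - 1) * #|a|%:R + (t^-1 - 1) * #|b|%:R.
Proof.
pose d s := (if a s then t - 1 else 0) + (if b s then t^-1 - 1 else 0).
rewrite (eq_bigr (fun s => 1 + d s)) => [|s _]; last first.
  rewrite /tilt /d; case: ifP => [as_|_].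
    by rewrite (negbTE (ab_disjoint as_)) addr0 addrC subrK.
  by case: ifP; rewrite ?add0r ?addr0 // addrC subrK.
rewrite !big_split /= -!big_mkcond /= sumr_const (sumr_const a) (sumr_const b) addrA.
by rewrite !mulr_natr.
Qed.

Variable F : realFieldType.

Lemma tilt_ge0 (t : F) s : 0 < t -> 0 <= tilt t s.
Proof.
by move=> t_gt0; rewrite /tilt; case: (a s); case: (b s); rewrite ?invr_ge0 ?ler01 // ltW.
Qed.

Lemma prod_tilt_ge1 m (t : F) (f : {ffun 'I_m -> T}) : 0 < t <= 1 ->
  (#|[set j | a (f j)]| <= #|[set j | b (f j)]|)%nat -> 1 <= \prod_j tilt t (f j).
Proof.
move=> /andP[t_gt0 t_le1] hits.
rewrite (bigID (fun j => a (f j))) /= [X in _ * X](bigID (fun j => b (f j))) /=.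
rewrite (eq_bigr (fun _ => t)); last by move=> j; rewrite /tilt => ->.
rewrite [X in _ * (X * _)](eq_bigr (fun _ => t^-1)); last first.
  by move=> j /andP[/negbTE na nb]; rewrite /tilt na nb.
rewrite [X in _ * (_ * X)](eq_bigr (fun _ => 1)); last first.
  by move=> j /andP[/negbTE na /negbTE nb]; rewrite /tilt na nb.
rewrite !prodr_const expr1n mulr1.
have -> : #|[pred j | a (f j)]| = #|[set j | a (f j)]| by apply: eq_card => j; rewrite inE.
have -> : #|[pred j | ~~ a (f j) & b (f j)]| = #|[set j | b (f j)]|.
  apply: eq_card => j; rewrite !inE /=.
  by case ha: (a (f j)) => //=; rewrite (negbTE (ab_disjoint ha)).
rewrite -(subnKC hits) exprD mulrA -exprMn mulfV ?gt_eqF // expr1n mul1r.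
by apply: exprn_ege1; rewrite invf_ge1.
Qed.

Lemma card_fewer_hits_le m (t : F) : 0 < t <= 1 ->
  #|[set f : {ffun 'I_m -> T} | (#|[set j | a (f j)]| <= #|[set j | b (f j)]|)%nat]|%:R
  <= (#|T|%:R + (t - 1) * #|a|%:R + (t^-1 - 1) * #|b|%:R) ^+ m.
Proof.
move=> t_range; have t_gt0 : 0 < t by case/andP: t_range.
set E := [set f | _].
rewrite -sum_tilt -[m in X in _ <= X]card_ord -prodr_const bigA_distr_bigA /=.
rewrite -sum1_card natr_sum [X in _ <= X](bigID (mem E)) /=.
rewrite -[X in X <= _]addr0 lerD //.
  by apply: ler_sum => f; rewrite inE; apply: prod_tilt_ge1.
by apply: sumr_ge0 => f _; apply: prodr_ge0 => j _; apply: tilt_ge0.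
Qed.

Lemma tilt_mass_ge0 (t : F) : 0 < t ->
  0 <= #|T|%:R + (t - 1) * #|a|%:R + (t^-1 - 1) * #|b|%:R.
Proof. by move=> t_gt0; rewrite -sum_tilt; apply: sumr_ge0 => s _; apply: tilt_ge0. Qed.

End Tilting.

Section RealBounds.

Local Open Scope R_scope.

Lemma prob_seeds_fewer_hits_le n m (a b : pred 'I_n) (t : R) :
  (0 < n)%nat -> (forall s, a s -> ~~ b s) -> 0 < t -> t <= 1 ->
  prob_seeds n m (fun f => #|[set j | a (f j)]| <= #|[set j | b (f j)]|)%nat
  <= ((INR n + (t - 1) * INR #|a| + (/ t - 1) * INR #|b|) / INR n) ^ m.
Proof.
move=> n_gt0 ab_disjoint t_gt0 t_le1.
have t_range := introT andP (conj (introT RltP t_gt0) (introT RleP t_le1)).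
have /RleP := card_fewer_hits_le ab_disjoint m t_range.
rewrite card_ord -RpowE -!INRE -RinvE => count_le.
rewrite /prob_seeds /Rdiv Rpow_mult_distr pow_inv pow_INR.
apply: Rmult_le_compat_r count_le.
by apply/Rlt_le/Rinv_0_lt_compat/pow_lt/lt_0_INR; lia.
Qed.

Lemma tilt_optimal A B alpha beta : 0 < B < A -> A <= alpha -> 0 <= beta <= B ->
  let t := sqrt B / sqrt A in
  (t - 1) * alpha + (/ t - 1) * beta <= - (sqrt A - sqrt B) ^ 2.
Proof.
move=> [B_gt0 BA] A_alpha beta_range t.
have sA2 : sqrt A * sqrt A = A by apply: sqrt_sqrt; lra.
have sB2 : sqrt B * sqrt B = B by apply: sqrt_sqrt; lra.
have sB_gt0 : 0 < sqrt B by apply: sqrt_lt_R0.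
have sBA : sqrt B < sqrt A by apply: sqrt_lt_1_alt; lra.
have t_inv : / t = sqrt A / sqrt B by rewrite /t; field; lra.
have alpha_term : (t - 1) * alpha <= (t - 1) * A.
  apply: Rmult_le_compat_neg_l => //; rewrite /t.
  apply/Rle_minus/(Rmult_le_reg_r (sqrt A)); first lra.
  by field_simplify; lra.
have beta_term : (/ t - 1) * beta <= (/ t - 1) * B.
  apply: Rmult_le_compat_l; last lra.
  rewrite t_inv; apply/Rge_le/Rge_minus/Rle_ge/(Rmult_le_reg_r (sqrt B)); first lra.
  by field_simplify; lra.
suff : (t - 1) * A + (/ t - 1) * B = - (sqrt A - sqrt B) ^ 2 by lra.
rewrite t_inv /t -[A in _ * A + _]sA2 -[B in _ + _ * B]sB2.
by field; lra.
Qed.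

Lemma pow_le_exp_ln x y m : 0 <= x <= y -> 0 < y -> x ^ m <= exp (INR m * ln y).
Proof.
move=> x_range y_gt0; rewrite -ln_pow // exp_ln; last exact: pow_lt.
by apply: pow_incr.
Qed.

Lemma prob_seeds_fewer_hits_exp n m k (a b : pred 'I_n) :
  (forall s, a s -> ~~ b s) -> (2 < k < n)%nat -> (k <= #|a|)%nat -> (#|b| <= 2)%nat ->
  prob_seeds n m (fun f => #|[set j | a (f j)]| <= #|[set j | b (f j)]|)%nat
  <= exp (INR m * ln (1 - / INR n * (sqrt (INR k) - sqrt 2) ^ 2)).
Proof.
move=> ab_disjoint k_range card_a card_b.
have k_gt2 : 2 < INR k by rewrite (_ : 2 = INR 2) //; apply: lt_INR; lia.
have k_lt_n : INR k < INR n by apply: lt_INR; lia.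
have n_gt0 : (0 < n)%nat by lia.
set sk := sqrt (INR k); set s2 := sqrt 2.
have s2_gt0 : 0 < s2 by apply: sqrt_lt_R0; lra.
have s2_lt : s2 < sk by apply: sqrt_lt_1_alt; lra.
have sk2 : sk * sk = INR k by apply: sqrt_sqrt; lra.
set t := s2 / sk.
have t_gt0 : 0 < t by apply: Rdiv_lt_0_compat; lra.
have t_le1 : t <= 1 by apply/(Rmult_le_reg_r sk); [lra | rewrite /t; field_simplify; lra].
apply: Rle_trans (prob_seeds_fewer_hits_le m n_gt0 ab_disjoint t_gt0 t_le1) _.
have /RleP := tilt_mass_ge0 ab_disjoint (introT RltP t_gt0).
rewrite card_ord -!INRE -RinvE.
set S := INR n + _ + _ => S_ge0.
have S_le : S <= INR n - (sk - s2) ^ 2.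
  have card_aR : INR k <= INR #|a| by apply: le_INR; lia.
  have card_bR : INR #|b| <= 2 by rewrite (_ : 2 = INR 2) //; apply: le_INR; lia.
  have := tilt_optimal (conj Rlt_0_2 k_gt2) card_aR (conj (pos_INR _) card_bR).
  by rewrite -/sk -/s2 -/t /S; lra.
have gap_lt_n : (sk - s2) ^ 2 < INR n by nra.
have -> : 1 - / INR n * (sk - s2) ^ 2 = (INR n - (sk - s2) ^ 2) / INR n by field; lra.
have n_inv_gt0 : 0 < / INR n by apply: Rinv_0_lt_compat; lra.
apply: pow_le_exp_ln; first split.
- exact: Rmult_le_pos S_ge0 (Rlt_le _ _ n_inv_gt0).
- exact: Rmult_le_compat_r (Rlt_le _ _ n_inv_gt0) S_le.
- by apply: Rmult_lt_0_compat; lra.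
Qed.

End RealBounds.

Theorem mainTheorem4 (n l m : nat) :
  6 <= n -> ~~ odd n -> 2 <= l -> 2 * l < n ->
  forall i : nat, Bset n l i -> i <> l + 1 ->
  (prob_seeds n m (fun s => leq (Xi (Bset n l) s (l + 1)) (Xi (Bset n l) s i))
   <= exp (INR m * ln (1 - / INR n * (sqrt (INR (l + 1)) - sqrt 2) ^ 2)))%R.
Proof.
(* [6 <= n] is implied by the other hypotheses. *)
move=> _ n_even l_ge2 l_small i Bi i_ne.
set a := fun s : 'I_n => votes_for (Bset n l) s (l + 1).
set b := fun s : 'I_n => votes_for (Bset n l) s i.
apply: (@prob_seeds_fewer_hits_exp n m (l + 1) a b).
- by move=> s l1_s; apply/negP => /(votes_for_functional l1_s) /esym.
- lia.
- apply: card_votes_for_min; [lia | exact: Bset_l1 | ].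
  by move=> c /(Bset_bounds l_small) /andP[].
- have [c Bc ci] := Bset_gap n_even l_small Bi i_ne.
  have c_range : 1 <= c < i by have := Bset_bounds l_small Bc; lia.
  by apply: leq_trans (card_votes_for_gap n c_range Bc) _; lia.
Qed.
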